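(* Let $v\equiv 1$ or $7\pmod{24}$ with $v\ge 25$, let $n=\frac{v-1}{6}$, and let $p$ be an integer such that there exist two Skolem sequences of order $n$ with exactly $p$ pairs in common. Then for all integers $k,i,j$ with $0\le j\le p$, $0\le i\le p-j$ and $2p-2i-2j\le k\le 2n-2i-2j$, there exists a cyclic four-fold triple system CTS$(v,4)$ whose fine structure satisfies $(c_2,c_3,c_4)=(k,i,j)$.
   Context: A Skolem sequence of order $n$ is a sequence $(s_1,\ldots,s_{2n})$ in which each $k\in\{1,\ldots,n\}$ occurs exactly twice, at positions $a_k<b_k$ with $b_k-a_k=k$. Two Skolem sequences of order $n$ have exactly $p$ pairs in common if exactly $p$ values occupy the same two positions in both. A cyclic $\lambda$-fold triple system CTS$(v,\lambda)$ is a multiset of 3-element subsets of $\mathbb Z_v$ such that every 2-element subset is contained in exactly $\lambda$ blocks (with multiplicity), invariant under $x\mapsto x+1$; it is a union of translation orbits with multiplicities, a base block being an orbit representative. The fine structure is $(c_1,\ldots,c_\lambda)$, $c_i$ = number of distinct base blocks (orbits) occurring with multiplicity exactly $i$. *)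

From mathcomp Require Import all_boot all_order all_algebra.
Set Implicit Arguments. Unset Strict Implicit. Unset Printing Implicit Defensive.

(* A Skolem sequence of order n, written as a list s = [s_1; ...; s_2n]
   (0-based list positions). *)
Definition skolem_seq (n : nat) (s : seq nat) : Prop :=
  size s = 2 * n /\
  all (fun x => (0 < x) && (x <= n)) s /\
  (forall k, 1 <= k <= n ->
     count_mem k s = 2 /\ nth 0 s (index k s + k) = k).

(* Number of values k in {1..n} occupying the same two positions in s1 and s2
   (the pair of positions of k is (index k s, index k s + k)). *)
Definition common_pairs (n : nat) (s1 s2 : seq nat) : nat :=
  count (fun k => index k s1 == index k s2) (iota 1 n).

Definition translate (v : nat) (d : 'Z_v) (B : {set 'Z_v}) : {set 'Z_v} :=
  [set (x + d)%R | x in B].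

Definition is_CTS (v lambda : nat) (m : {set 'Z_v} -> nat) : Prop :=
  (forall B, 0 < m B -> #|B| = 3) /\
  (forall x y : 'Z_v, x != y ->
     \sum_(B : {set 'Z_v} | (x \in B) && (y \in B)) m B = lambda) /\
  (forall (d : 'Z_v) B, m (translate d B) = m B).

Definition orbit_of (v : nat) (B : {set 'Z_v}) : {set {set 'Z_v}} :=
  [set translate d B | d : 'Z_v].

Definition fine_c (v : nat) (m : {set 'Z_v} -> nat) (i : nat) : nat :=
  #|[set orbit_of B | B in [set B : {set 'Z_v} | m B == i]]|.

From mathcomp Require Import all_boot all_order all_algebra zify ring.
Import GRing.Theory.
Set Implicit Arguments. Unset Strict Implicit. Unset Printing Implicit Defensive.

(* With v = 6n + 1, the pairs (a_r, a_r + r) of a Skolem sequence of order n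
   give the difference triples {r, a_r + n + 1, a_r + r + n + 1}, r = 1..n,
   which partition {1, ..., 3n}.  A triple {x, y, x + y} is the difference
   multiset of both base blocks {0, x, x + y} and {0, y, x + y}, so taking the
   triples of each of the two Skolem sequences with total weight 2 covers every
   nonzero difference of Z_v four times.  A triple shared by both sequences may
   put its weight 4 on its two blocks as 4+0, 3+1 or 2+2, any other triple its
   weight 2 as 2+0 or 1+1; assigning these splits by rank realises
   (c_2, c_3, c_4) = (k, i, j).  Base blocks {0, a, c} with a < c < v/2 lie in
   pairwise distinct full orbits, so c_K is the number of base blocks of
   weight K. *)

Section Translates.
Variable v : nat.
Local Open Scope ring_scope.
Implicit Types (d e x : 'Z_v) (X : {set 'Z_v}).

Lemma translate0 X : translate 0 X = X.
Proof.
apply/setP => x; apply/imsetP/idP => [[y yX ->]|xX]; first by rewrite addr0.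
by exists x; rewrite ?addr0.
Qed.

Lemma translateD d e X : translate e (translate d X) = translate (d + e) X.
Proof. by rewrite /translate -imset_comp; apply: eq_imset => x /=; rewrite addrA. Qed.

Lemma translate_inj d : injective (translate d).
Proof.
by move=> X Y /(congr1 (translate (- d))); rewrite !translateD subrr !translate0.
Qed.

Lemma mem_translate d x X : (x \in translate d X) = (x - d \in X).
Proof.
apply/imsetP/idP => [[y yX ->]|xX]; first by rewrite addrK.
by exists (x - d); rewrite ?subrK.
Qed.

Lemma card_translate d X : #|translate d X| = #|X|.
Proof. exact/card_imset/addIr. Qed.

Lemma orbit_of_translate d X : orbit_of (translate d X) = orbit_of X.
Proof.
apply/setP => Y; apply/imsetP/imsetP => [[e _ ->]|[e _ ->]].
  by exists (d + e); rewrite ?translateD.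
by exists (e - d) => //; rewrite translateD addrC subrK.
Qed.

End Translates.

Definition diff_count v (X : {set 'Z_v}) (delta : 'Z_v) : nat :=
  #|[set t in X | (t + delta)%R \in X]|.

Section Development.
Variables (v : nat) (I : finType) (base : I -> {set 'Z_v}) (w : I -> nat).

Definition develop (B : {set 'Z_v}) : nat :=
  \sum_e w e * \sum_(d : 'Z_v) (translate d (base e) == B).

Lemma develop_translate d B : develop (translate d B) = develop B.
Proof.
rewrite /develop; apply: eq_bigr => e _; congr (_ * _).
rewrite (reindex_inj (addIr d%R)) /=; apply: eq_bigr => d' _.
by rewrite -translateD (inj_eq (@translate_inj _ d)).
Qed.

Lemma sum_translates_through X x y :
  \sum_(d : 'Z_v) ((x \in translate d X) && (y \in translate d X))
  = diff_count X (y - x)%R.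
Proof.
rewrite /diff_count -sum1dep_card (reindex_inj (can_inj (subKr x))) /=.
rewrite [RHS]big_mkcond; apply: eq_bigr => t _.
rewrite !mem_translate subKr opprB addrCA [(y - x)%R]addrC.
by case: (_ && _).
Qed.

Lemma sum_develop_pair x y :
  \sum_(B : {set 'Z_v} | (x \in B) && (y \in B)) develop B
  = \sum_e w e * diff_count (base e) (y - x)%R.
Proof.
rewrite /develop exchange_big; apply: eq_bigr => e _.
rewrite -big_distrr exchange_big -sum_translates_through /=; congr (_ * _).
apply: eq_bigr => d _; rewrite big_mkcond (bigD1 (translate d (base e))) //=.
by rewrite eqxx big1 ?addn0 ?if_same // => B /negbTE; rewrite eq_sym => ->; case: ifP.
Qed.

Lemma develop_gt0 B : 0 < develop B ->
  exists e d, 0 < w e /\ B = translate d (base e).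
Proof.
rewrite lt0n sum_nat_eq0 => /forallPn [e]; rewrite muln_eq0 negb_or => /andP [we].
rewrite sum_nat_eq0 => /forallPn [d]; rewrite eqb0 negbK => /eqP <-.
by exists e, d; rewrite lt0n.
Qed.

Hypothesis free_orbits : forall e e' d, 0 < w e -> 0 < w e' ->
  translate d (base e) = base e' -> e = e' /\ d = 0%R.

Lemma develop_base e : 0 < w e -> develop (base e) = w e.
Proof.
move=> we; rewrite /develop (bigD1 e) //= [X in _ + X]big1 ?addn0 => [|e' ne'].
  rewrite (bigD1 0%R) //= translate0 eqxx [X in _ + X]big1 ?addn0 ?muln1 // => d nd0.
  by apply/eqP; rewrite eqb0; apply: contra nd0 => /eqP /free_orbits [] // _ ->.
case: (posnP (w e')) => [-> //|w'0]; rewrite big1 ?muln0 // => d _.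
by apply/eqP; rewrite eqb0; apply: contra ne' => /eqP /free_orbits [] // ->.
Qed.

Lemma fine_c_develop K : 0 < K ->
  fine_c develop K = #|[set e | w e == K]|.
Proof.
move=> K0; rewrite /fine_c.
have -> : [set orbit_of B | B in [set B | develop B == K]] =
          [set orbit_of (base e) | e in [set e | w e == K]].
  apply/setP => Y; apply/imsetP/imsetP => [[B]|[e]]; rewrite inE => /eqP mK ->.
    have [e [d [we EB]]] : exists e d, 0 < w e /\ B = translate d (base e).
      by apply: develop_gt0; rewrite mK.
    subst B.
    exists e; last by rewrite orbit_of_translate.
    by rewrite inE -(develop_base we) -(develop_translate d) mK.
  by exists (base e); rewrite // inE develop_base ?mK.
rewrite card_in_imset // => e e'; rewrite !inE => /eqP we /eqP we' E.
have /imsetP [d _ /esym] : base e \in orbit_of (base e').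
  by rewrite -E; apply/imsetP; exists 0%R; rewrite ?translate0.
by case/free_orbits; rewrite ?we ?we'.
Qed.

End Development.

Lemma sum_set3 (T : finType) (x y z : T) (F : T -> nat) :
  x != y -> x != z -> y != z ->
  \sum_(t in [set x; y; z]) F t = F x + F y + F z.
Proof.
move=> xy xz yz; rewrite -setUA big_setU1 /=; last by rewrite !inE negb_or xy xz.
by rewrite big_setU1 /= ?big_set1 ?addnA // inE.
Qed.

Lemma eq_modn_lt_double m x y : x < m + m -> y < m ->
  (x %% m == y) = (x == y) || (x == y + m).
Proof.
move=> xlt ylt; case: (ltnP x m) => [xm|mx]; first by rewrite modn_small //; lia.
by rewrite -(subnK mx) modnDr modn_small; lia.
Qed.

Section Blocks.
Variable u : nat.
Local Notation v := u.+2.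
Local Open Scope ring_scope.
Implicit Types (a c e : nat) (d z delta : 'Z_v).

Definition block a c : {set 'Z_v} := [set 0; a%:R; c%:R].

Definition normal_pair a c := ((0 < a < c) && (2 * c < v))%N.

Lemma val_natr a : (a < v)%N -> (a%:R : 'Z_v) = a :> nat.
Proof. by move=> av; rewrite val_Zp_nat // modn_small. Qed.

Lemma mem_block z a c : (a < v)%N -> (c < v)%N ->
  (z \in block a c) = [|| z == 0%N :> nat, z == a :> nat | z == c :> nat].
Proof. by move=> av cv; rewrite !inE -orbA -!val_eqE /= !val_natr. Qed.

Lemma block_uniq a c : (0 < a < c)%N -> (c < v)%N ->
  [/\ 0 != a%:R :> 'Z_v, 0 != c%:R :> 'Z_v & a%:R != c%:R :> 'Z_v].
Proof. by move=> ac cv; rewrite -!val_eqE /= !val_natr; [split; lia | lia ..]. Qed.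

Lemma card_block a c : (0 < a < c)%N -> (c < v)%N -> #|block a c| = 3%N.
Proof. by move=> ac /(block_uniq ac) [*]; rewrite -sum1_card sum_set3. Qed.

Lemma translate_block_eq a1 c1 a2 c2 d :
  normal_pair a1 c1 -> normal_pair a2 c2 ->
  translate d (block a1 c1) = block a2 c2 -> [/\ a1 = a2, c1 = c2 & d = 0].
Proof.
(* Since 2c < v, the gap from c back to 0 is the unique longest one. *)
move=> /andP [h1 h1'] /andP [h2 h2'] E.
have [h0 ha hc] : [/\ 0 + d \in block a2 c2, a1%:R + d \in block a2 c2
                    & c1%:R + d \in block a2 c2].
  by split; rewrite -E; apply: imset_f; rewrite !inE eqxx ?orbT.
move: h0 ha hc; rewrite !mem_block; try lia.
rewrite /= !val_natr -/v; try lia.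
have dv : (@nat_of_ord v d < v)%N := ltn_ord d.
rewrite !eq_modn_lt_double; [|lia ..].
move=> *; suff d0 : @nat_of_ord v d = 0%N by split; [lia | lia | exact: val_inj].
lia.
Qed.

Definition pm_count delta e : nat := (delta == e%:R) + (delta == - e%:R).

Lemma diff_count_block a c delta : (0 < a < c)%N -> (c < v)%N -> delta != 0 ->
  diff_count (block a c) delta
  = (pm_count delta a + pm_count delta c + pm_count delta (c - a))%N.
Proof.
move=> ac cv d0; have [n0a n0c nac] := block_uniq ac cv.
rewrite /diff_count -sum1dep_card big_mkcondr sum_set3 //=.
have mem3 z : (if z \in block a c then 1 else 0)
               = ((z == 0%R) + (z == a%:R) + (z == c%:R))%N.
  rewrite !inE; case: (z =P 0) => [->|_]; first by rewrite (negbTE n0a) (negbTE n0c).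
  by case: (z =P a%:R) => [->|_]; [rewrite (negbTE nac) | case: (z =P c%:R)].
have shift x y : (x + delta == y) = (delta == y - x).
  by rewrite [x + _]addrC eq_sym -subr_eq eq_sym.
rewrite !mem3 !shift /pm_count natrB; last by lia.
rewrite ?opprB ?subrr ?sub0r ?subr0 (negbTE d0).
by rewrite /= !add0n !addn0; ring.
Qed.

Definition zdist delta : nat := minn delta (v - delta).

Lemma zdist_bounds h delta : v = h.*2.+1 -> delta != 0 -> (0 < zdist delta <= h)%N.
Proof.
move=> vh; rewrite -val_eqE /= /zdist => d0.
have : (delta < v)%N := ltn_ord delta.
lia.
Qed.

Lemma pm_count_zdist h delta e : v = h.*2.+1 -> delta != 0 -> (0 < e <= h)%N ->
  pm_count delta e = (zdist delta == e).
Proof.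
move=> vh; rewrite -val_eqE /= => d0 he.
rewrite /pm_count /zdist -!val_eqE /= val_natr; last by lia.
have := ltn_ord delta; rewrite -[Zp_trunc _]/u in d0 * => dv.
rewrite modn_small; last by lia.
move: (nat_of_ord delta) d0 dv => x; lia.
Qed.

End Blocks.

Lemma sum_ord_eq N a : \sum_(q < N) (a == q :> nat) = (a < N).
Proof.
case: (ltnP a N) => [aN|Na].
  rewrite (bigD1 (Ordinal aN)) //= eqxx big1 // => q.
  by rewrite -val_eqE eq_sym /= => /negbTE ->.
by rewrite big1 // => q _; apply/eqP; rewrite eqb0; apply/eqP; have := ltn_ord q; lia.
Qed.

Lemma sum_le1_eq N (f : nat -> nat) : (forall q, q < N -> f q <= 1) ->
  \sum_(q < N) f q = N -> forall q, q < N -> f q = 1.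
Proof.
move=> le1 sumN q qN.
have /leqif_sum [_] : forall q : 'I_N, true -> f q <= 1 ?= iff (f q == 1).
  by move=> q' _; split; rewrite ?le1.
rewrite sumN sum1_card card_ord eqxx => /esym /forall_inP /(_ (Ordinal qN)).
by move=> /(_ isT) /eqP.
Qed.

Section Skolem.
Variables (n : nat) (s : seq nat).
Hypothesis sk : skolem_seq n s.

Lemma skolem_first r : 0 < r <= n -> nth 0 s (index r s) = r.
Proof.
case: sk => _ [_ H] /H [c2 _]; apply: nth_index.
by rewrite -has_pred1 has_count c2.
Qed.

Lemma skolem_second r : 0 < r <= n -> nth 0 s (index r s + r) = r.
Proof. by case: sk => _ [_ H] /H []. Qed.

Lemma skolem_second_lt r : 0 < r <= n -> index r s + r < 2 * n.
Proof.
move=> rn; have := skolem_second rn; case: sk => <- _.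
by case: ltnP => // ge; rewrite nth_default //; lia.
Qed.

Lemma skolem_position_cover q : q < 2 * n ->
  \sum_(r0 < n) ((index r0.+1 s == q) + (index r0.+1 s + r0.+1 == q)) = 1.
Proof.
(* The value at a position determines the only pair that can end there, and
   the 2n pair ends fill the 2n positions. *)
pose f q := \sum_(r0 < n) ((index r0.+1 s == q) + (index r0.+1 s + r0.+1 == q)).
have f_le1 q' : q' < 2 * n -> f q' <= 1.
  move=> _; apply: leq_trans (leq_b1 ((nth 0 s q').-1 < n)).
  rewrite -sum_ord_eq leq_sum // => r0 _.
  have rn : 0 < r0.+1 <= n by rewrite /= ltn_ord.
  case: (index r0.+1 s =P q') => [<-|_].
    by case: eqP => [|_]; [lia | rewrite skolem_first // eqxx].
  by case: eqP => // <-; rewrite skolem_second // eqxx.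
suff : \sum_(q' < 2 * n) f q' = 2 * n by move/sum_le1_eq; apply.
rewrite exchange_big /= (eq_bigr (fun _ => 2)) => [|r0 _].
  by rewrite sum_nat_const card_ord mulnC.
have rn : 0 < r0.+1 <= n by rewrite /= ltn_ord.
have := skolem_second_lt rn.
rewrite big_split /= !sum_ord_eq => lt2n.
by rewrite lt2n (leq_ltn_trans (leq_addr _ _) lt2n).
Qed.

Lemma skolem_difference_cover q : 0 < q <= 3 * n ->
  \sum_(r0 < n) ((q == r0.+1) + (q == index r0.+1 s + n.+1)
                 + (q == index r0.+1 s + r0.+1 + n.+1)) = 1.
Proof.
move=> qn; under eq_bigr do rewrite -addnA.
rewrite big_split /=.
have -> : \sum_(r0 < n) (q == r0.+1) = (q.-1 < n).
  by rewrite -(sum_ord_eq n q.-1); apply: eq_bigr => r0 _; lia.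
case: (leqP q n) => [le_qn|lt_nq].
  by rewrite big1 => [|r0 _]; lia.
rewrite -(skolem_position_cover (q := q - n.+1)); last by lia.
rewrite (_ : q.-1 < n = false) ?add0n; last by lia.
by apply: eq_bigr => r0 _; lia.
Qed.

End Skolem.

Lemma sum_rank_lt (P : pred nat) J N :
  \sum_(r < N) (P r && (\sum_(r' < r) P r' < J)) = minn J (\sum_(r < N) P r).
Proof.
elim: N => [|N IH]; first by rewrite !big_ord0 minn0.
rewrite !big_ord_recr /= IH; case: (P N) => /=; last by rewrite !addn0.
by set g := \sum_(r < N) P r; case: (g < J) / idP => /=; lia.
Qed.

Lemma sum_predC (P : pred nat) N : \sum_(r < N) ~~ P r = N - \sum_(r < N) P r.
Proof.
suff : \sum_(r < N) P r + \sum_(r < N) ~~ P r = N by lia.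
rewrite -big_split /= (eq_bigr (fun => 1)) => [|r _]; last by case: (P r).
by rewrite sum1_card card_ord.
Qed.

Lemma sum_pair_bool2 (I : finType) (F : I * (bool * bool) -> nat) :
  \sum_e F e = \sum_x (F (x, (true, true)) + F (x, (true, false))
                       + F (x, (false, true)) + F (x, (false, false))).
Proof.
rewrite (eq_bigr (fun e => F (e.1, e.2))) => [|[] //].
rewrite -(pair_bigA _ (fun x bl => F (x, bl))); apply: eq_bigr => x _.
rewrite (eq_bigr (fun bl => F (x, (bl.1, bl.2)))) => [|[] //].
rewrite -(pair_bigA _ (fun b l => F (x, (b, l)))) /=.
by rewrite !big_bool /= addnA.
Qed.

Section Construction.
Variables (n : nat) (s1 s2 : seq nat) (i j J1 J2 : nat).
Hypotheses (sk1 : skolem_seq n s1) (sk2 : skolem_seq n s2).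
Local Notation design_index := ('I_n * (bool * bool))%type.

Definition first_pos (b : bool) (r : nat) : nat := index r (if b then s2 else s1).

Lemma skolem_of b : skolem_seq n (if b then s2 else s1).
Proof. by case: b. Qed.

(* The index (r0, (b, long)) stands for r = r0 + 1 in the Skolem sequence
   selected by b, whose r-pair is (a, a + r); it names the base block
   {0, a + n + 1, a + r + n + 1} if long, and {0, r, a + r + n + 1} otherwise. *)
Definition block_a (e : design_index) : nat :=
  let: (r0, (b, long)) := e in if long then first_pos b r0.+1 + n.+1 else r0.+1.

Definition block_c (e : design_index) : nat :=
  let: (r0, (b, _)) := e in first_pos b r0.+1 + r0.+1 + n.+1.

Definition common (r0 : nat) : bool := first_pos false r0.+1 == first_pos true r0.+1.
Definition common_rank (r0 : nat) : nat := \sum_(r' < r0) common r'.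
Definition distinct_rank (r0 : nat) : nat := \sum_(r' < r0) ~~ common r'.

(* A pair common to both sequences puts weight 4 on the blocks from s1 only;
   any other pair has weight 2 in each sequence.  The splits are chosen by rank
   among the common (resp. the other) pairs. *)
Definition common_weight (r0 : nat) : nat :=
  if common_rank r0 < j then 4 else if common_rank r0 < i + j then 3 else 2.

Definition distinct_weight (J r0 : nat) : nat := if distinct_rank r0 < J then 2 else 1.

Definition weight (e : design_index) : nat :=
  let: (r0, (b, long)) := e in
  if common r0 then
    if b then 0 else if long then 4 - common_weight r0 else common_weight r0
  else
    let x := distinct_weight (if b then J2 else J1) r0 in if long then 2 - x else x.

Lemma card_weight K : #|[set e | weight e == K]| =
  \sum_(r0 < n) ((weight (r0, (true, true)) == K) + (weight (r0, (true, false)) == K)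
                + (weight (r0, (false, true)) == K) + (weight (r0, (false, false)) == K)).
Proof. by rewrite -sum1dep_card big_mkcond sum_pair_bool2. Qed.

Lemma weight_count4 r0 :
  (weight (r0, (true, true)) == 4) + (weight (r0, (true, false)) == 4)
  + (weight (r0, (false, true)) == 4) + (weight (r0, (false, false)) == 4)
  = common r0 && (common_rank r0 < j).
Proof.
rewrite /weight /common_weight /distinct_weight.
by case: (common r0) => /=; repeat case: ifP => ?; lia.
Qed.

Lemma weight_count3 r0 :
  (weight (r0, (true, true)) == 3) + (weight (r0, (true, false)) == 3)
  + (weight (r0, (false, true)) == 3) + (weight (r0, (false, false)) == 3)
  + (common r0 && (common_rank r0 < j)) = common r0 && (common_rank r0 < i + j).
Proof.
rewrite /weight /common_weight /distinct_weight.
by case: (common r0) => /=; repeat case: ifP => ?; lia.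
Qed.

Lemma weight_count2 r0 :
  (weight (r0, (true, true)) == 2) + (weight (r0, (true, false)) == 2)
  + (weight (r0, (false, true)) == 2) + (weight (r0, (false, false)) == 2)
  + 2 * (common r0 && (common_rank r0 < i + j))
  = 2 * common r0 + (~~ common r0 && (distinct_rank r0 < J1))
    + (~~ common r0 && (distinct_rank r0 < J2)).
Proof.
rewrite /weight /common_weight /distinct_weight.
by case: (common r0) => /=; repeat case: ifP => ?; lia.
Qed.

Definition common_count : nat := \sum_(r0 < n) common r0.

Lemma common_pairs_count : common_pairs n s1 s2 = common_count.
Proof.
rewrite /common_pairs -sum1_count big_mkcond /=.
have -> : iota 1 n = index_iota 1 n.+1 by rewrite /index_iota subSS subn0.
by rewrite big_add1 /= big_mkord.
Qed.

Lemma card_weight4 : #|[set e | weight e == 4]| = minn j common_count.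
Proof.
rewrite card_weight (eq_bigr _ (fun r0 _ => weight_count4 r0)).
exact: sum_rank_lt.
Qed.

Lemma card_weight3 :
  #|[set e | weight e == 3]| + minn j common_count = minn (i + j) common_count.
Proof.
rewrite card_weight /common_count -!sum_rank_lt -big_split /=.
by apply: eq_bigr => r0 _; rewrite -weight_count3.
Qed.

Lemma card_weight2 :
  #|[set e | weight e == 2]| + 2 * minn (i + j) common_count
  = 2 * common_count + minn J1 (n - common_count) + minn J2 (n - common_count).
Proof.
rewrite card_weight /common_count -sum_predC -sum_rank_lt.
rewrite -!(sum_rank_lt (fun r => ~~ common r)) !big_distrr -!big_split /=.
by apply: eq_bigr => r0 _; rewrite -weight_count2.
Qed.

Lemma base_injective e e' : 0 < weight e -> 0 < weight e' ->
  block_a e = block_a e' -> block_c e = block_c e' -> e = e'.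
Proof.
case: e => r0 [b l]; case: e' => r0' [b' l'] /=.
have rn : 0 < r0.+1 <= n by rewrite /= ltn_ord.
have rn' : 0 < r0'.+1 <= n by rewrite /= ltn_ord.
have := skolem_second_lt (skolem_of b) rn; rewrite -/(first_pos b r0.+1).
have := skolem_second_lt (skolem_of b') rn'; rewrite -/(first_pos b' r0'.+1).
move=> lt' lt w w' ea ec.
have [el er] : l = l' /\ r0 = r0' :> nat by case: l l' ea {w w'} => [] [] /=; lia.
have er0 : r0 = r0' := val_inj er; subst l' r0'.
have ep : first_pos b r0.+1 = first_pos b' r0.+1 by lia.
suff -> : b = b' by [].
move: w w'; rewrite /weight /common.
by case: b b' ep {ea ec lt lt'} => [] [] // ->; rewrite eqxx.
Qed.

Section CyclicDesign.
Variable u : nat.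
Hypothesis v_eq : u.+2 = (6 * n).+1.
Local Notation v := u.+2.

Definition base_block (e : design_index) : {set 'Z_v} := block u (block_a e) (block_c e).

Lemma normal_base e : normal_pair u (block_a e) (block_c e).
Proof.
case: e => r0 [b long]; have rn : 0 < r0.+1 <= n by rewrite /= ltn_ord.
have := skolem_second_lt (skolem_of b) rn; rewrite -/(first_pos b r0.+1).
by rewrite /normal_pair /=; case: long; lia.
Qed.

Definition triple_hits (r0 : nat) (b : bool) (delta : 'Z_v) : nat :=
  (zdist delta == r0.+1) + (zdist delta == first_pos b r0.+1 + n.+1)
  + (zdist delta == first_pos b r0.+1 + r0.+1 + n.+1).

Lemma diff_count_base r0 b long delta : delta != 0%R ->
  diff_count (base_block (r0, (b, long))) delta = triple_hits r0 b delta.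
Proof.
move=> d0; have rn : 0 < r0.+1 <= n by rewrite /= ltn_ord.
have := skolem_second_lt (skolem_of b) rn; rewrite -/(first_pos b r0.+1) => lt2n.
have vh : v = (3 * n).*2.+1 by lia.
have := normal_base (r0, (b, long)); rewrite /normal_pair => /andP [ac cv].
rewrite diff_count_block //; last by lia.
by rewrite !(pm_count_zdist vh d0) /triple_hits /=; case: long {ac cv} => /=; lia.
Qed.

Lemma sum_triple_hits b delta : delta != 0%R -> \sum_(r0 < n) triple_hits r0 b delta = 1.
Proof.
move=> d0; rewrite /triple_hits /first_pos.
apply: (skolem_difference_cover (skolem_of b)).
by apply: (zdist_bounds (h := 3 * n)) => //; lia.
Qed.

Lemma weighted_triple_hits r0 delta : delta != 0%R ->
  weight (r0, (true, true)) * diff_count (base_block (r0, (true, true))) delta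
  + weight (r0, (true, false)) * diff_count (base_block (r0, (true, false))) delta
  + weight (r0, (false, true)) * diff_count (base_block (r0, (false, true))) delta
  + weight (r0, (false, false)) * diff_count (base_block (r0, (false, false))) delta
  = 2 * triple_hits r0 true delta + 2 * triple_hits r0 false delta.
Proof.
move=> d0; rewrite !diff_count_base // /weight.
case: (boolP (common r0)) => [/eqP same|_].
  have -> : triple_hits r0 true delta = triple_hits r0 false delta.
    by rewrite /triple_hits same.
  rewrite /common_weight; move: (triple_hits r0 false delta) => h.
  by case: ifP => _; [|case: ifP => _]; lia.
move: (triple_hits r0 true delta) (triple_hits r0 false delta) => h1 h2.
by rewrite /distinct_weight; case: ifP => _; case: ifP => _; lia.
Qed.

Lemma sum_weighted_diff_count delta : delta != 0%R ->
  \sum_e weight e * diff_count (base_block e) delta = 4.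
Proof.
move=> d0; rewrite sum_pair_bool2.
rewrite (eq_bigr _ (fun r0 _ => weighted_triple_hits r0 d0)).
by rewrite big_split -!big_distrr /= !sum_triple_hits.
Qed.

Lemma free_orbits_base e e' d : 0 < weight e -> 0 < weight e' ->
  translate d (base_block e) = base_block e' -> e = e' /\ d = 0%R.
Proof.
move=> w w' /(translate_block_eq (normal_base e) (normal_base e')) [ea ec ->].
by split=> //; apply: base_injective.
Qed.

End CyclicDesign.

End Construction.

Theorem mainTheorem14 (v p : nat) :
  (v %% 24 = 1 \/ v %% 24 = 7) -> 25 <= v ->
  (exists s1 s2 : seq nat,
      skolem_seq ((v - 1) %/ 6) s1 /\ skolem_seq ((v - 1) %/ 6) s2 /\
      common_pairs ((v - 1) %/ 6) s1 s2 = p) ->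
  forall k i j : nat,
    j <= p -> i + j <= p ->
    2 * p <= k + 2 * i + 2 * j ->
    k + 2 * i + 2 * j <= 2 * ((v - 1) %/ 6) ->
    exists m : {set 'Z_v} -> nat,
      is_CTS 4 m /\ fine_c m 2 = k /\ fine_c m 3 = i /\ fine_c m 4 = j.
Proof.
move=> v_mod v_ge [s1 [s2 [sk1 [sk2 common_p]]]] k i j le_jp le_ijp k_lo k_hi.
have : v = (6 * ((v - 1) %/ 6)).+1 by lia.
move: ((v - 1) %/ 6) sk1 sk2 common_p k_hi => n sk1 sk2 common_p k_hi.
case: v v_mod v_ge => [|[|u]] v_mod v_ge v_eq; try lia.
pose J1 := (k + 2 * i + 2 * j - 2 * p) - (k + 2 * i + 2 * j - 2 * p) %/ 2.
pose J2 := (k + 2 * i + 2 * j - 2 * p) %/ 2.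
have free := @free_orbits_base n s1 s2 i j J1 J2 sk1 sk2 u v_eq.
exists (develop (base_block s1 s2 u) (@weight n s1 s2 i j J1 J2)).
split; [split; [|split] | ].
- move=> B /develop_gt0 [e [d [_ ->]]]; rewrite card_translate.
  by case/andP: (normal_base sk1 sk2 v_eq e) => ac cv; rewrite card_block //; lia.
- move=> x y xy; rewrite sum_develop_pair.
  by rewrite (sum_weighted_diff_count _ _ _ _ sk1 sk2 v_eq) // subr_eq0 eq_sym.
- exact: develop_translate.
have := card_weight2 n s1 s2 i j J1 J2; have := card_weight3 n s1 s2 i j J1 J2.
have := card_weight4 n s1 s2 i j J1 J2.
rewrite -!(fine_c_develop free) // -common_pairs_count common_p.
by lia.
Qed.
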